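(* For each $n$, consider the distributed system (under the RJSQ policy) and its minimum-delay service pool (MDSP), as described in the context, both initially empty. Then the process \[ \Gamma^\dagger_n(t)=\big(W_n(t)+U_n(t)\big)-\big(W^\dagger_n(t)+U^\dagger_n(t)\big),\quad t\ge0, \] has continuous, piecewise linear sample paths, and $\Gamma^\dagger_n(t)\ge0$ for all $t\ge0$.
   Context: Distributed system $n$: $s\ge2$ stations with single work-conserving FCFS servers, unlimited waiting room, service rates $0<\mu_1\le\cdots\le\mu_s$, $\mu=\sum_k\mu_k$. Customer $j$ appears at time $a_n(j)=\sum_{i\le j}z(i)/\lambda_n$ ($z(i)$ i.i.d. nonnegative, mean 1); it comes from origin $m\in\{1,\ldots,b\}$ with probability $p_m>0$ (i.i.d. across customers), in which case its traveling delay to station $k$ is $\sqrt n d_{m,k}$, $d_{m,k}\ge0$. It is routed by the randomized join-the-shortest-queue (RJSQ) policy to a destination $\xi_n(j)$ and arrives there at time $a_n(j)+\sqrt n d_{m,\xi_n(j)}$. The $i$th customer arriving at (served by) station $k$ has service requirement $w_k(i)$ (i.i.d. nonnegative, mean 1) and service time $w_k(i)/\mu_k$. $W_n(t)=\sum_kW_{n,k}(t)$, where $W_{n,k}(t)$ is the total unfinished service requirement (remaining service time times $\mu_k$) of customers present at station $k$; $U_n(t)$ (en route workload) is the total service requirement of customers that have appeared by time $t$ but not yet arrived at their stations. MDSP $n$: a single station with one work-conserving FCFS server of rate $\mu$ and unlimited waiting room. For each customer $j$ of distributed system $n$, from origin $m$ and sent to station $k$, there is a class-$k$ counterpart that appears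 at $a_n(j)$, arrives at the MDSP station at time $a_n(j)+\sqrt n\,\underline d_m$ with $\underline d_m=\min_\ell d_{m,\ell}$, and has the same service requirement (service time requirement$/\mu$). $W^\dagger_n(t)$ is the total unfinished service requirement at the MDSP station and $U^\dagger_n(t)$ the total service requirement of counterparts that have appeared but not yet arrived. *)

From HB Require Import structures.
From mathcomp Require Import all_boot all_order all_algebra.
From mathcomp Require Import all_classical all_reals all_analysis.
Set Implicit Arguments. Unset Strict Implicit. Unset Printing Implicit Defensive.
Import Order.TTheory GRing.Theory Num.Theory.
Import numFieldNormedType.Exports.
Local Open Scope ring_scope.
Local Open Scope classical_set_scope.

Section Defs.
Variable R : realType.

(** appearance time a_n(j) = (z(0)+...+z(j))/lambda_n  (customers indexed from 0) *)
Definition appear (lam : R) (z : nat -> R) (j : nat) : R :=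
  (\sum_(i < j.+1) z i) / lam.

Definition dmin (s b : nat) (d : 'I_b -> 'I_s -> R) (m : 'I_b) : R :=
  (match s as s0 return ('I_s0 -> R) -> R with
   | 0 => fun _ => 0
   | s'.+1 => fun f => \big[Num.min/ f ord0]_(l < s'.+1) f l
   end) (d m).

(** sum over all customers j = 0,1,2,... (limit of partial sums; all sums used
    below have only finitely many nonzero terms) *)
Definition tsum (f : nat -> R) : R := limn (fun M => \sum_(j < M) f j).

(** workload (in units of service requirement) at time t of an initially empty
    single work-conserving server of rate r, fed by the right-continuous
    cumulative work-arrival function A (Skorokhod reflection of the netput
    X(u) = A(u) - r u). *)
Definition workload (r : R) (A : R -> R) (t : R) : R :=
  A t - r * t - Num.min 0 (inf [set A u - r * u | u in `[0, t]]).

Definition piecewise_linear (f : R -> R) : Prop :=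
  exists tau : nat -> R,
    [/\ tau 0%N = 0, (forall i, tau i < tau i.+1),
        (forall M, exists i, M < tau i) &
        (forall i, exists alpha beta : R,
            forall t, tau i <= t <= tau i.+1 -> f t = alpha + beta * t)].

Section Systems.
Variables (s b : nat) (n : nat) (lam : R) (mu : 'I_s -> R)
          (d : 'I_b -> 'I_s -> R) (z : nat -> R) (orig : nat -> 'I_b)
          (xi : nat -> 'I_s) (v : nat -> R).

(** arrival time of customer j at its destination station xi j *)
Definition arr_dist (j : nat) : R :=
  appear lam z j + Num.sqrt (n%:R) * d (orig j) (xi j).

Definition arr_mdsp (j : nat) : R :=
  appear lam z j + Num.sqrt (n%:R) * dmin d (orig j).

Definition arrived_work (k : 'I_s) (u : R) : R :=
  tsum (fun j => if (xi j == k) && (arr_dist j <= u) then v j else 0).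

Definition W_dist (t : R) : R :=
  \sum_(k < s) workload (mu k) (arrived_work k) t.

Definition U_dist (t : R) : R :=
  tsum (fun j => if (appear lam z j <= t) && (t < arr_dist j) then v j else 0).

Definition arrived_work_mdsp (u : R) : R :=
  tsum (fun j => if arr_mdsp j <= u then v j else 0).

Definition W_mdsp (t : R) : R :=
  workload (\sum_(k < s) mu k) arrived_work_mdsp t.

Definition U_mdsp (t : R) : R :=
  tsum (fun j => if (appear lam z j <= t) && (t < arr_mdsp j) then v j else 0).

Definition Gamma (t : R) : R := (W_dist t + U_dist t) - (W_mdsp t + U_mdsp t).

End Systems.
End Defs.

From HB Require Import structures.
From mathcomp Require Import all_boot all_order all_algebra.
From mathcomp Require Import all_classical all_reals all_analysis.
From mathcomp Require Import ring lra.
Set Implicit Arguments. Unset Strict Implicit. Unset Printing Implicit Defensive.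
Import Order.TTheory GRing.Theory Num.Theory.
Import numFieldNormedType.Exports.
Local Open Scope ring_scope.
Local Open Scope classical_set_scope.

(* Write the workload of a work-conserving server of rate [r] fed by the
   cumulative work [A] as [A t - S t], where the served work
   [S t = min (r t) (inf_(0 <= u <= t) A u + r (t - u))] is the regulator of the
   Skorokhod reflection. Every customer's work is either en route or has
   arrived, in both systems, so Gamma = S_mdsp - sum_k S_k. Since a counterpart
   reaches the MDSP no later than its customer reaches its station, the arrived
   work satisfies sum_k A_k <= A_mdsp, and the min-formula then gives
   sum_k S_k <= S_mdsp, i.e. Gamma >= 0. The arrival processes are locally
   finite step functions, so near each time every S is a minimum of affine
   functions on either side; functions with affine one-sided germs everywhere
   on [0, +oo[ are continuous, and taking suprema of affine extensions produces
   a locally finite sequence of breakpoints. *)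

Section AffinePieces.
Variable R : realType.
Implicit Types (f g : R -> R) (a b t x y : R).

Definition affine_on f x y :=
  exists a b, forall u, x <= u <= y -> f u = a + b * u.

Lemma affine_on_sub f x y x' y' :
  x <= x' -> y' <= y -> affine_on f x y -> affine_on f x' y'.
Proof.
move=> xx' y'y [a [b Hf]]; exists a, b => u /andP[xu uy]; apply: Hf.
by rewrite (le_trans xx' xu) (le_trans uy y'y).
Qed.

Lemma affine_on_eq f g x y :
  (forall u, x <= u <= y -> f u = g u) -> affine_on g x y -> affine_on f x y.
Proof. by move=> fg [a [b Hg]]; exists a, b => u xuy; rewrite fg ?Hg. Qed.

Lemma affine_onD f g x y :
  affine_on f x y -> affine_on g x y -> affine_on (fun u => f u + g u) x y.
Proof.
move=> [a [b Hf]] [a' [b' Hg]]; exists (a + a'), (b + b') => u xuy.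
by rewrite Hf ?Hg //; ring.
Qed.

Lemma affine_onB f g x y :
  affine_on f x y -> affine_on g x y -> affine_on (fun u => f u - g u) x y.
Proof.
move=> [a [b Hf]] [a' [b' Hg]]; exists (a - a'), (b - b') => u xuy.
by rewrite Hf ?Hg //; ring.
Qed.

Lemma affine_onN f x y :
  affine_on f x y -> affine_on (fun u => f (- u)) (- y) (- x).
Proof.
move=> [a [b Hf]]; exists a, (- b) => u /andP[yu ux].
by rewrite Hf; [ring | rewrite lerNr ux lerNl yu].
Qed.

(* Two affine functions that agree at two distinct points agree everywhere. *)
Lemma affine_on_glue f x y x' y' :
  x <= x' < y -> y <= y' -> affine_on f x y -> affine_on f x' y' ->
  affine_on f x y'.
Proof.
move=> /andP[xx' x'y] yy' [a [b Hf]] [a' [b' Hg]].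
have agree p : x' <= p <= y -> a + b * p = a' + b' * p.
  move=> /andP[x'p py]; rewrite -Hf -?Hg ?x'p ?py //.
    by rewrite (le_trans py yy').
  by rewrite (le_trans xx' x'p).
have ex' : a + b * x' = a' + b' * x' by apply: agree; rewrite lexx ltW.
have ey : a + b * y = a' + b' * y by apply: agree; rewrite lexx ltW.
have /eqP : (b - b') * (y - x') = 0 by lra.
rewrite mulf_eq0 [y - x' == 0]subr_eq0 (gt_eqF x'y) orbF subr_eq0 => /eqP eb.
have ea : a = a' by rewrite eb in ex'; lra.
exists a, b => u /andP[xu uy']; have [uy|yu] := leP u y; first by rewrite Hf ?xu.
by rewrite Hg ?uy' ?ea ?eb // (le_trans (ltW x'y) (ltW yu)).
Qed.

Definition affine_right f t := exists2 e, 0 < e & affine_on f t (t + e).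

(* Reflecting [u] to [- u] turns left germs into right germs, so the closure
   properties of right germs hold for left germs by conversion. *)
Definition affine_left f t := affine_right (fun u => f (- u)) (- t).

Lemma affine_leftP f t :
  affine_left f t <-> exists2 e, 0 < e & affine_on f (t - e) t.
Proof.
split=> -[e e0 Hf]; exists e => //; have := affine_onN Hf.
  by rewrite opprD !opprK; apply: affine_on_eq => u _; rewrite opprK.
by rewrite opprB addrC.
Qed.

Lemma affine_right_eq f g t e : 0 < e ->
  (forall u, t <= u <= t + e -> f u = g u) -> affine_right g t -> affine_right f t.
Proof.
move=> e0 fg [e' e'0 Hg]; exists (Num.min e e'); first by rewrite lt_min e0.
apply: affine_on_eq (affine_on_sub _ _ Hg) => [u /andP[tu ue]||]; rewrite ?lexx //.
  by apply: fg; rewrite tu (le_trans ue) // lerD2l ge_min lexx.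
by rewrite lerD2l ge_min lexx orbT.
Qed.

Lemma affine_left_eq f g t e : 0 < e ->
  (forall u, t - e <= u <= t -> f u = g u) -> affine_left g t -> affine_left f t.
Proof.
by move=> e0 fg; apply: affine_right_eq e0 _ => u /andP[tu ue]; apply: fg; lra.
Qed.

Lemma affine_right_common f g t : affine_right f t -> affine_right g t ->
  exists2 e, 0 < e & affine_on f t (t + e) /\ affine_on g t (t + e).
Proof.
move=> [e e0 Hf] [e' e'0 Hg]; exists (Num.min e e'); first by rewrite lt_min e0.
have le_e : t + Num.min e e' <= t + e by rewrite lerD2l ge_min lexx.
have le_e' : t + Num.min e e' <= t + e' by rewrite lerD2l ge_min lexx orbT.
by split; [apply: affine_on_sub Hf | apply: affine_on_sub Hg].
Qed.

Lemma affine_rightD f g t : affine_right f t -> affine_right g t ->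
  affine_right (fun u => f u + g u) t.
Proof.
move=> hf hg; have [e e0 [Hf Hg]] := affine_right_common hf hg.
by exists e; last exact: affine_onD.
Qed.

Lemma affine_rightB f g t : affine_right f t -> affine_right g t ->
  affine_right (fun u => f u - g u) t.
Proof.
move=> hf hg; have [e e0 [Hf Hg]] := affine_right_common hf hg.
by exists e; last exact: affine_onB.
Qed.

Lemma affine_right_sum (I : Type) (r : seq I) (F : I -> R -> R) t :
  (forall i, affine_right (F i) t) -> affine_right (fun u => \sum_(i <- r) F i u) t.
Proof.
move=> HF; elim: r => [|i r IH].
  by exists 1 => //; exists 0, 0 => u _; rewrite big_nil; ring.
by apply: (affine_right_eq ltr01 _ (affine_rightD (HF i) IH)) => u _; rewrite big_cons.
Qed.

Lemma affine_right_sign a b t : exists2 e, 0 < e &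
  (forall u, t <= u <= t + e -> 0 <= a + b * u) \/
  (forall u, t <= u <= t + e -> a + b * u <= 0).
Proof.
set h := a + b * t; have hE u : a + b * u = h + b * (u - t) by rewrite /h; ring.
have [h0|h0] := eqVneq h 0.
  exists 1 => //; have [b0|b0] := leP 0 b; [left|right] => u /andP[tu _];
    rewrite hE h0 add0r; [apply: mulr_ge0 | apply: mulr_le0_ge0]; lra.
pose e := `|h| / (`|b| + 1).
have e0 : 0 < e by rewrite divr_gt0 ?normr_gt0 // ltr_wpDl.
have small u : t <= u <= t + e -> `|b * (u - t)| <= `|h|.
  move=> /andP[tu ue]; rewrite normrM (ger0_norm (_ : 0 <= u - t)) ?subr_ge0 //.
  have : (u - t) * (`|b| + 1) <= `|h| by rewrite -ler_pdivlMr ?ltr_wpDl // -/e; lra.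
  have := normr_ge0 b; nra.
exists e => //; have [hp|hn] := ltP 0 h; [left|right] => u hu;
  have := small u hu; have := ler_norm (b * (u - t)); have := ler_norm (- (b * (u - t)));
  rewrite normrN hE.
- by rewrite (gtr0_norm hp); lra.
- by rewrite (ler0_norm hn); lra.
Qed.

Lemma affine_right_min f g t : affine_right f t -> affine_right g t ->
  affine_right (fun u => Num.min (f u) (g u)) t.
Proof.
move=> hf hg; have [e e0 [[a [b Hf]] [a' [b' Hg]]]] := affine_right_common hf hg.
have [e' e'0 sgn] := affine_right_sign (a - a') (b - b') t.
have he : 0 < Num.min e e' by rewrite lt_min e0.
have sub u : t <= u <= t + Num.min e e' -> t <= u <= t + e /\ t <= u <= t + e'.
  by move=> /andP[tu ue]; rewrite !tu !(le_trans ue) // lerD2l ge_min lexx ?orbT.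
case: sgn => sgn; [apply: (affine_right_eq he _ hg) | apply: (affine_right_eq he _ hf)];
  move=> u /sub[ue ue']; have := sgn u ue'; rewrite Hf // Hg // => h.
- by rewrite min_r //; lra.
- by rewrite min_l //; lra.
Qed.

End AffinePieces.

Section LocallyAffine.
Variable R : realType.
Implicit Types (f g : R -> R) (a b t : R).

Definition locally_affine f :=
  forall t, 0 <= t -> affine_right f t /\ (0 < t -> affine_left f t).

Lemma locally_affine_affine f a b : (forall u, f u = a + b * u) -> locally_affine f.
Proof.
move=> fE t _; split=> [|_]; exists 1 => //; [exists a, b | exists a, (- b)] => u _;
  rewrite fE; ring.
Qed.

Lemma locally_affine2 (op : R -> R -> R) :
  (forall f g t, affine_right f t -> affine_right g t ->
     affine_right (fun u => op (f u) (g u)) t) ->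
  forall f g, locally_affine f -> locally_affine g ->
  locally_affine (fun u => op (f u) (g u)).
Proof.
move=> op_right f g hf hg t t0; have [fr fl] := hf t t0; have [gr gl] := hg t t0.
by split=> [|t_gt0]; apply: op_right; [| | exact: fl | exact: gl].
Qed.

Lemma locally_affineD f g : locally_affine f -> locally_affine g ->
  locally_affine (fun u => f u + g u).
Proof.
by move=> hf hg t; apply: (locally_affine2 (op := +%R) (@affine_rightD R) hf hg).
Qed.

Lemma locally_affineB f g : locally_affine f -> locally_affine g ->
  locally_affine (fun u => f u - g u).
Proof.
move=> hf hg t.
by apply: (locally_affine2 (op := fun x y => x - y) (@affine_rightB R) hf hg).
Qed.

Lemma locally_affine_min f g : locally_affine f -> locally_affine g ->
  locally_affine (fun u => Num.min (f u) (g u)).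
Proof.
by move=> hf hg t; apply: (locally_affine2 (op := Num.min) (@affine_right_min R) hf hg).
Qed.

Lemma locally_affine_sum (I : Type) (r : seq I) (F : I -> R -> R) :
  (forall i, locally_affine (F i)) ->
  locally_affine (fun u => \sum_(i <- r) F i u).
Proof.
move=> HF t t0; split=> [|t_gt0]; apply: affine_right_sum => i.
  by case: (HF i t t0).
by case: (HF i t t0) => _; apply.
Qed.

Lemma affine_cvg a b t : (fun u => a + b * u) @ t --> a + b * t.
Proof.
by apply: cvgD; [exact: cvg_cst | apply: cvgM; [exact: cvg_cst | exact: cvg_id]].
Qed.

Lemma affine_on_cvg_right f t e :
  0 < e -> affine_on f t (t + e) -> f @ t^'+ --> f t.
Proof.
move=> e0 [a [b Hf]].
have f_near : {near t^'+, (fun u => a + b * u) =1 f}.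
  near=> u; rewrite Hf //; apply/andP; split; near: u.
    exact: nbhs_right_ge.
  by apply: nbhs_right_le; rewrite ltrDl.
rewrite Hf ?lexx ?lerDl ?ltW //.
apply: cvg_trans (near_eq_cvg f_near) _; apply: cvg_at_right_filter; exact: affine_cvg.
Unshelve. all: by end_near.
Qed.

Lemma affine_on_cvg_left f t e :
  0 < e -> affine_on f (t - e) t -> f @ t^'- --> f t.
Proof.
move=> e0 [a [b Hf]].
have f_near : {near t^'-, (fun u => a + b * u) =1 f}.
  near=> u; rewrite Hf //; apply/andP; split; near: u.
    by apply: nbhs_left_ge; rewrite gtrDl oppr_lt0.
  exact: nbhs_left_le.
rewrite Hf ?lexx ?gerDl ?oppr_le0 ?ltW //.
apply: cvg_trans (near_eq_cvg f_near) _; apply: cvg_at_left_filter; exact: affine_cvg.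
Unshelve. all: by end_near.
Qed.

Lemma locally_affine_continuous f :
  locally_affine f -> {within `[0, +oo[, continuous f}.
Proof.
move=> hf; apply/continuous_within_itvcyP; split=> [t|].
  rewrite in_itv /= andbT => t_gt0.
  have [[e e0 Hr] /(_ t_gt0) /affine_leftP[e' e'0 Hl]] := hf t (ltW t_gt0).
  apply/left_right_continuousP; split.
    exact: affine_on_cvg_left Hl.
  exact: affine_on_cvg_right Hr.
by have [[e e0 Hr] _] := hf 0 (lexx 0); exact: affine_on_cvg_right Hr.
Qed.

End LocallyAffine.

Section Breakpoints.
Variable R : realType.
Variable f : R -> R.
Hypothesis f_affine : locally_affine f.

Definition affine_extensions (a : R) := [set x | a < x <= a + 1 /\ affine_on f a x].

Definition next_breakpoint (a : R) := sup (affine_extensions a).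

Lemma affine_extensions_neq0 a : 0 <= a -> affine_extensions a !=set0.
Proof.
move=> a0; have [[e e0 He] _] := f_affine a0.
have m0 : 0 < Num.min e 1 by rewrite lt_min e0 ltr01.
exists (a + Num.min e 1); split; first by rewrite ltrDl m0 /= lerD2l ge_min lexx orbT.
by apply: affine_on_sub He; rewrite ?lerD2l ?ge_min ?lexx.
Qed.

Lemma has_sup_affine_extensions a : 0 <= a -> has_sup (affine_extensions a).
Proof.
by move=> a0; split; [exact: affine_extensions_neq0 | exists (a + 1) => x [/andP[]]].
Qed.

Lemma le_next_breakpoint a x :
  0 <= a -> affine_extensions a x -> x <= next_breakpoint a.
Proof. by move=> a0; apply: sup_upper_bound; exact: has_sup_affine_extensions. Qed.

(* At [next_breakpoint a] the left germ overlaps an affine extension from [a],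
   so the two glue into a single affine piece. *)
Lemma next_breakpoint_spec a :
  0 <= a -> a < next_breakpoint a /\ affine_on f a (next_breakpoint a).
Proof.
move=> a0; set b := next_breakpoint a.
have ab : a < b.
  have [x Sx] := affine_extensions_neq0 a0; have [/andP[ax _] _] := Sx.
  exact: lt_le_trans ax (le_next_breakpoint a0 Sx).
split=> //; have b0 : 0 < b := le_lt_trans a0 ab.
have /affine_leftP[e e0 Hb] := (f_affine (ltW b0)).2 b0.
have m0 : 0 < Num.min e (b - a) by rewrite lt_min e0 subr_gt0.
have [x Sx bx] := sup_adherent m0 (has_sup_affine_extensions a0).
have [/andP[ax _] Hx] := Sx; have xb : x <= b := le_next_breakpoint a0 Sx.
have overlap : a <= Num.max a (b - e) < x.
  rewrite le_max lexx /= gt_max ax /=; apply: le_lt_trans bx.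
  by rewrite lerD2l lerN2 ge_min lexx.
apply: affine_on_glue overlap xb Hx _.
by apply: affine_on_sub Hb; rewrite ?le_max ?lexx ?orbT.
Qed.

Fixpoint breakpoint (i : nat) : R :=
  if i is i'.+1 then next_breakpoint (breakpoint i') else 0.

Lemma breakpoint_ge0 i : 0 <= breakpoint i.
Proof.
elim: i => [|i IH] //=; have [lt_next _] := next_breakpoint_spec IH.
exact: le_trans IH (ltW lt_next).
Qed.

Lemma breakpoint_lt i : breakpoint i < breakpoint i.+1.
Proof. by have [] := next_breakpoint_spec (breakpoint_ge0 i). Qed.

(* If the breakpoints accumulated at [L], the left germ at [L] would be an
   affine extension from a breakpoint close to [L], reaching [L] in one step. *)
Lemma breakpoint_unbounded M : exists i, M < breakpoint i.
Proof.
apply: contrapT => /forallNP bounded.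
have le_M i : breakpoint i <= M by rewrite leNgt; apply/negP/bounded.
have hs : has_sup (range breakpoint).
  by split; [exists 0, 0%N | exists M => _ [i _ <-]].
set L := sup (range breakpoint).
have le_L i : breakpoint i <= L by apply: sup_upper_bound => //; exists i.
have L0 : 0 < L.
  exact: le_lt_trans (breakpoint_ge0 0) (lt_le_trans (breakpoint_lt 0) (le_L 1%N)).
have /affine_leftP[e e0 HL] := (f_affine (ltW L0)).2 L0.
have m0 : 0 < Num.min e 1 by rewrite lt_min e0 ltr01.
have [_ [i _ <-] Li] := sup_adherent m0 hs; rewrite -/L in Li.
have me : Num.min e 1 <= e by rewrite ge_min lexx.
have m1 : Num.min e 1 <= 1 by rewrite ge_min lexx orbT.
have : affine_extensions (breakpoint i) L.
  split; last by apply: affine_on_sub HL; rewrite ?lexx //; lra.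
  rewrite (lt_le_trans (breakpoint_lt i) (le_L _)) /=; lra.
move=> /(le_next_breakpoint (breakpoint_ge0 i)) L_le.
by have := breakpoint_lt i.+1; have := le_L i.+2; rewrite /= in L_le *; lra.
Qed.

Lemma locally_affine_piecewise_linear : piecewise_linear f.
Proof.
exists breakpoint; split=> //; [exact: breakpoint_lt | exact: breakpoint_unbounded |].
by move=> i; have [_ [a [b Hf]]] := next_breakpoint_spec (breakpoint_ge0 i); exists a, b.
Qed.

End Breakpoints.

Section StepFunction.
Variable R : realType.
Variables (c w : nat -> R).

Definition step_fun (J : nat) (u : R) := \sum_(j < J) (if c j <= u then w j else 0).

Lemma near_step_thresholds J t :
  \forall u \near t, forall j : 'I_J, c j != t -> (c j <= u) = (c j <= t).
Proof.
apply: (@filter_forall _ _ _ (nbhs t) _) => j; case: ltgtP => [ct|tc|->].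
- by apply: filterS (lt_nbhsr ct) => u /ltW ->.
- by apply: filterS (lt_nbhsl tc) => u ut _; rewrite leNgt ut.
- exact: nearW.
Qed.

Lemma step_fun_right J t : exists2 e, 0 < e &
  forall u, t <= u <= t + e -> step_fun J u = step_fun J t.
Proof.
have /nbhs_ballP[e /= e0 He] := near_step_thresholds J t.
exists (e / 2) => [|u /andP[tu ue]]; first by rewrite divr_gt0.
have /He {}He : ball t e u.
  by rewrite /ball /= distrC ger0_norm ?subr_ge0 //; lra.
apply: eq_bigr => j _; have [->|cjt] := eqVneq (c j) t; first by rewrite tu lexx.
by rewrite He.
Qed.

Lemma step_fun_left J t : exists2 e, 0 < e &
  forall u, t - e <= u < t -> step_fun J u = \sum_(j < J) (if c j < t then w j else 0).
Proof.
have /nbhs_ballP[e /= e0 He] := near_step_thresholds J t.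
exists (e / 2) => [|u /andP[ue ut]]; first by rewrite divr_gt0.
have /He {}He : ball t e u.
  by rewrite /ball /= ger0_norm ?subr_ge0 ?ltW //; lra.
apply: eq_bigr => j _; have [->|cjt] := eqVneq (c j) t.
  by rewrite ltxx leNgt ut.
by rewrite He // lt_neqAle cjt.
Qed.

Lemma step_fun_ge0 J u : (forall j, 0 <= w j) -> 0 <= step_fun J u.
Proof. by move=> w_ge0; apply: sumr_ge0 => j _; case: ifP. Qed.

End StepFunction.

Section Reflection.
Variable R : realType.
Variables (r : R) (A : R -> R).
Hypotheses (r_gt0 : 0 < r) (A_ge0 : forall u, 0 <= A u).

Definition netput_inf t := inf [set A u - r * u | u in `[0, t]].

Definition served t := r * t + Num.min 0 (netput_inf t).

Lemma workloadE t : workload r A t = A t - served t.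
Proof. by rewrite /workload /served /netput_inf; ring. Qed.

Lemma has_lbound_netput t : has_lbound [set A u - r * u | u in `[0, t]].
Proof.
exists (- r * Num.max t 0) => _ [u + <-]; rewrite /= in_itv /= => /andP[u0 ut].
have := A_ge0 u; have : r * u <= r * Num.max t 0 by rewrite ler_pM2l // le_max ut.
lra.
Qed.

Lemma netput_inf_le t u : 0 <= u <= t -> netput_inf t <= A u - r * u.
Proof.
by move=> hu; apply: (ge_inf (has_lbound_netput t)); exists u; rewrite /= ?in_itv.
Qed.

Lemma le_netput_inf t m : 0 <= t ->
  (forall u, 0 <= u <= t -> m <= A u - r * u) -> m <= netput_inf t.
Proof.
move=> t0 hm; apply: lb_le_inf.
  by exists (A 0 - r * 0), 0; rewrite /= ?in_itv /= ?lexx.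
by move=> _ [u hu <-]; apply: hm; move: hu; rewrite /= in_itv.
Qed.

Lemma netput_inf_anti t t' : 0 <= t -> t <= t' -> netput_inf t' <= netput_inf t.
Proof.
move=> t0 tt'; apply: le_netput_inf => // u /andP[u0 ut].
by apply: netput_inf_le; rewrite u0 (le_trans ut).
Qed.

Lemma served_le_rate t : served t <= r * t.
Proof. by rewrite /served gerDl ge_min lexx. Qed.

Lemma served_le_arrivals t u : 0 <= u <= t -> served t <= A u + r * (t - u).
Proof.
move=> ut; have := netput_inf_le ut; have := ge_min (netput_inf t) 0 (netput_inf t).
by rewrite /served lexx orbT; lra.
Qed.

Lemma le_served t m : 0 <= t -> m <= r * t ->
  (forall u, 0 <= u <= t -> m <= A u + r * (t - u)) -> m <= served t.
Proof.
move=> t0 m_rate m_arr.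
suff : m - r * t <= Num.min 0 (netput_inf t) by rewrite /served; lra.
rewrite le_min subr_le0 m_rate /=; apply: le_netput_inf => // u ut.
by have := m_arr u ut; lra.
Qed.

End Reflection.

Section StepArrivals.
Variable R : realType.
Variables (r : R) (A : R -> R) (c w : nat -> R).
Hypotheses (r_gt0 : 0 < r) (w_ge0 : forall j, 0 <= w j)
  (A_step : forall T, exists J, forall u, u <= T -> A u = step_fun c w J u).

Lemma arrivals_ge0 u : 0 <= A u.
Proof. by have [J ->] := A_step u; [exact: step_fun_ge0 | exact: lexx]. Qed.

Let netput_le := netput_inf_le r_gt0 arrivals_ge0.
Let netput_anti := netput_inf_anti r_gt0 arrivals_ge0.

Local Notation netput_inf := (netput_inf r A).
Local Notation served := (served r A).

Lemma arrivals_right t : exists2 e, 0 < e & forall u, t <= u <= t + e -> A u = A t.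
Proof.
have [J AJ] := A_step (t + 1); have [e e0 He] := step_fun_right c w J t.
have m0 : 0 < Num.min e 1 by rewrite lt_min e0 ltr01.
have me : Num.min e 1 <= e by rewrite ge_min lexx.
have m1 : Num.min e 1 <= 1 by rewrite ge_min lexx orbT.
exists (Num.min e 1) => // u /andP[tu ue].
by rewrite !AJ ?He ?tu //; lra.
Qed.

Lemma arrivals_left t : exists2 e, 0 < e & exists2 a, a <= A t &
  forall u, t - e <= u < t -> A u = a.
Proof.
have [J AJ] := A_step t; have [e e0 He] := step_fun_left c w J t.
exists e => //; exists (\sum_(j < J) (if c j < t then w j else 0)).
  rewrite AJ //; apply: ler_sum => j _.
  by case: ltP => [/ltW -> //|_]; case: ifP.
by move=> u /andP[ue ut]; rewrite AJ ?He ?ue ?ltW.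
Qed.

Lemma netput_inf_right t : 0 <= t -> exists2 e, 0 < e &
  forall u, t <= u <= t + e -> netput_inf u = Num.min (netput_inf t) (A t - r * u).
Proof.
move=> t0; have [e e0 Ae] := arrivals_right t; exists e => // u /andP[tu ue].
apply/eqP; rewrite eq_le; apply/andP; split.
  rewrite le_min netput_anti //= -(Ae u) ?tu //.
  by apply: netput_le; rewrite lexx (le_trans t0 tu).
apply: le_netput_inf => [|x /andP[x0 xu]]; first exact: le_trans tu.
have [xt|tx] := leP x t; first by rewrite ge_min netput_le ?x0.
rewrite ge_min Ae ?(ltW tx) ?(le_trans xu ue) //.
by rewrite lerD2l lerN2 ler_pM2l // xu orbT.
Qed.

(* [a - r * t] is the limit of [A u - r * u = a - r * u] as [u] increases to [t]. *)
Lemma netput_inf_le_left_limit t e a : 0 < e -> e <= t ->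
  (forall u, t - e <= u < t -> A u = a) -> netput_inf t <= a - r * t.
Proof.
move=> e0 et Ae; apply/ler_addgt0Pr => eps eps0.
pose d := Num.min e (eps / r).
have d0 : 0 < d by rewrite lt_min e0 divr_gt0.
have de : d <= e by rewrite ge_min lexx.
have rd : r * d <= eps by rewrite mulrC -ler_pdivlMr // ge_min lexx orbT.
apply: (le_trans (netput_le (u := t - d) _)); first by apply/andP; split; lra.
by rewrite Ae; [lra | apply/andP; split; lra].
Qed.

Lemma netput_inf_left t : 0 < t -> exists2 e, 0 < e & exists a,
  forall u, t - e <= u <= t -> netput_inf u = Num.min (netput_inf (t - e)) (a - r * u).
Proof.
move=> t_gt0; have [e' e'0 [a aA Ae']] := arrivals_left t.
pose e := Num.min e' t; have e0 : 0 < e by rewrite lt_min e'0.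
have et : e <= t by rewrite ge_min lexx orbT.
have Ae u : t - e <= u < t -> A u = a.
  move=> /andP[ue ut]; apply: Ae'; rewrite ut andbT (le_trans _ ue) //.
  by rewrite lerD2l lerN2 ge_min lexx.
exists e => //; exists a => u /andP[ue ut].
have te0 : 0 <= t - e by rewrite subr_ge0.
apply/eqP; rewrite eq_le; apply/andP; split.
  rewrite le_min netput_anti //=; have [{}ut|tu] := ltP u t.
    by rewrite -(Ae u) ?ue //; apply: netput_le; rewrite lexx (le_trans te0 ue).
  have -> : u = t by apply/eqP; rewrite eq_le ut tu.
  exact: netput_inf_le_left_limit e0 et Ae.
apply: le_netput_inf => [|x /andP[x0 xu]]; first exact: le_trans ue.
have [xt|tx] := leP x (t - e); first by rewrite ge_min netput_le ?x0.
have ax : a <= A x.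
  have [xt'|tx'] := ltP x t; first by rewrite Ae // (ltW tx) xt'.
  by have -> : x = t by apply/eqP; rewrite eq_le tx' (le_trans xu ut).
have rxu : r * x <= r * u by rewrite ler_pM2l.
by rewrite ge_min; apply/orP; right; lra.
Qed.

Lemma netput_inf_locally_affine : locally_affine netput_inf.
Proof.
move=> t t0; split=> [|t_gt0].
  have [e e0 He] := netput_inf_right t0; apply: (affine_right_eq e0 He).
  apply: affine_right_min; exists 1 => //.
    by exists (netput_inf t), 0 => u _; ring.
  by exists (A t), (- r) => u _; ring.
have [e e0 [a He]] := netput_inf_left t_gt0; apply: (affine_left_eq e0 He).
apply: affine_right_min; exists 1 => //.
  by exists (netput_inf (t - e)), 0 => u _; ring.
by exists a, r => u _; ring.
Qed.

Lemma served_locally_affine : locally_affine served.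
Proof.
apply: locally_affineD.
  by apply: (locally_affine_affine (a := 0) (b := r)) => u; ring.
apply: locally_affine_min netput_inf_locally_affine.
by apply: (locally_affine_affine (a := 0) (b := 0)) => u; ring.
Qed.


End StepArrivals.

Lemma sum_served_le_pooled (R : realType) (I : finType) (r : I -> R)
    (A : I -> R -> R) (B : R -> R) t :
  (forall i, 0 < r i) -> (forall i u, 0 <= A i u) ->
  (forall u, \sum_i A i u <= B u) -> 0 <= t ->
  \sum_i served (r i) (A i) t <= served (\sum_i r i) B t.
Proof.
move=> r_gt0 A_ge0 AB t0; apply: le_served => // [|u ut].
  by rewrite mulr_suml; apply: ler_sum => i _; exact: served_le_rate.
apply: (@le_trans _ _ (\sum_i (A i u + r i * (t - u)))).
  by apply: ler_sum => i _; exact: served_le_arrivals.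
by rewrite big_split /= -mulr_suml lerD2r.
Qed.

Lemma tsum_finite (R : realType) (f : nat -> R) J :
  (forall j, (J <= j)%N -> f j = 0) -> tsum f = \sum_(j < J) f j.
Proof.
move=> f0; apply: lim_near_cst; first exact: Rhausdorff.
exists J => // M /= JM.
rewrite -!(big_mkord xpredT) (big_cat_nat (leq0n J) JM) /=.
suff -> : \sum_(J <= j < M) f j = 0 by rewrite addr0.
by rewrite big_nat_cond big1 // => j /andP[/andP[/f0]].
Qed.

Lemma dmin_le (R : realType) (s b : nat) (d : 'I_b -> 'I_s -> R) m k :
  dmin d m <= d m k.
Proof. by case: s d k => [|s] d k; [case: k | exact: bigmin_le]. Qed.

Lemma dmin_ge0 (R : realType) (s b : nat) (d : 'I_b -> 'I_s -> R) m :
  (forall k, 0 <= d m k) -> 0 <= dmin d m.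
Proof. by case: s d => [|s] d d_ge0 //; apply: le_bigmin. Qed.

Section Systems.
Variable R : realType.
Variables (s b n : nat) (lam : R) (mu : 'I_s -> R) (d : 'I_b -> 'I_s -> R)
  (z : nat -> R) (orig : nat -> 'I_b) (xi : nat -> 'I_s) (v : nat -> R).
Hypotheses (lam_gt0 : 0 < lam) (d_ge0 : forall m k, 0 <= d m k)
  (z_ge0 : forall i, 0 <= z i)
  (appear_unbounded : forall M : R, exists j, M < appear lam z j)
  (v_ge0 : forall j, 0 <= v j) (mu_gt0 : forall k, 0 < mu k) (s_gt0 : (0 < s)%N).

Local Notation a := (appear lam z).
Local Notation ad := (arr_dist n lam d z orig xi).
Local Notation am := (arr_mdsp n lam d z orig).
Local Notation A_k := (arrived_work n lam d z orig xi v).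
Local Notation A_mdsp := (arrived_work_mdsp n lam d z orig v).

Lemma appear_le i j : (i <= j)%N -> a i <= a j.
Proof.
move=> /subnK <-; elim: (j - i)%N => //= k IH; apply: le_trans IH _.
by rewrite /appear ler_pM2r ?invr_gt0 // [leRHS]big_ord_recr lerDl.
Qed.

Lemma horizon T : exists J, forall j, (J <= j)%N -> T < a j.
Proof.
have [J TJ] := appear_unbounded T.
by exists J => j /appear_le; exact: lt_le_trans TJ.
Qed.

Lemma appear_le_mdsp j : a j <= am j.
Proof.
rewrite /arr_mdsp lerDl; apply: mulr_ge0; first exact: sqrtr_ge0.
exact: dmin_ge0.
Qed.

Lemma mdsp_le_dist j : am j <= ad j.
Proof. by rewrite lerD2l ler_wpM2l ?sqrtr_ge0 ?dmin_le. Qed.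

Lemma appear_le_dist j : a j <= ad j.
Proof. exact: le_trans (appear_le_mdsp j) (mdsp_le_dist j). Qed.

Lemma tsum_appeared t J (P : pred nat) (g : nat -> R) :
  (forall j, (J <= j)%N -> t < a j) -> (forall j, P j -> a j <= t) ->
  tsum (fun j => if P j then g j else 0) = \sum_(j < J) (if P j then g j else 0).
Proof.
move=> tJ Pa; apply: tsum_finite => j /tJ ta; case: ifP => // /Pa at_.
by have := lt_le_trans ta at_; rewrite ltxx.
Qed.

Lemma arrived_workE k u J : (forall j, (J <= j)%N -> u < a j) ->
  A_k k u = step_fun ad (fun j => if xi j == k then v j else 0) J u.
Proof.
move=> uJ; rewrite /arrived_work (tsum_appeared _ uJ).
  by apply: eq_bigr => j _; case: (xi j == k); case: ifP.
by move=> j /andP[_ /(le_trans (appear_le_dist j))].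
Qed.

Lemma arrived_work_mdspE u J : (forall j, (J <= j)%N -> u < a j) ->
  A_mdsp u = step_fun am v J u.
Proof.
by move=> uJ; rewrite /arrived_work_mdsp (tsum_appeared _ uJ) // => j;
  apply: le_trans (appear_le_mdsp j).
Qed.

Lemma sum_arrived_workE u J : (forall j, (J <= j)%N -> u < a j) ->
  \sum_(k < s) A_k k u = step_fun ad v J u.
Proof.
move=> uJ; under eq_bigr do rewrite (arrived_workE _ uJ).
rewrite /step_fun exchange_big /=; apply: eq_bigr => j _.
rewrite (bigD1 (xi j)) //= eqxx big1 ?addr0 // => k /negbTE.
by rewrite eq_sym => ->; case: ifP.
Qed.

Lemma sum_arrived_work_le_mdsp u : \sum_(k < s) A_k k u <= A_mdsp u.
Proof.
have [J uJ] := horizon u.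
rewrite (sum_arrived_workE uJ) (arrived_work_mdspE uJ); apply: ler_sum => j _.
by case: ifP => [/(le_trans (mdsp_le_dist j)) -> // | _]; case: ifP.
Qed.

Lemma work_conservation t :
  \sum_(k < s) A_k k t + U_dist n lam d z orig xi v t =
  A_mdsp t + U_mdsp n lam d z orig v t.
Proof.
have [J tJ] := horizon t.
have U_E (c : nat -> R) : (forall j, a j <= c j) ->
    tsum (fun j => if (a j <= t) && (t < c j) then v j else 0) =
    \sum_(j < J) (if (a j <= t) && (t < c j) then v j else 0).
  by move=> ac; apply: tsum_appeared tJ _ => j /andP[].
have split_at (x y : R) j : x <= y ->
    (if y <= t then v j else 0) + (if (x <= t) && (t < y) then v j else 0) =
    (if x <= t then v j else 0).
  move=> xy; case: (leP y t) => [yt|ty].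
    by rewrite (le_trans xy yt) addr0.
  by rewrite add0r andbT.
rewrite (sum_arrived_workE tJ) (arrived_work_mdspE tJ) /U_dist /U_mdsp.
rewrite (U_E _ appear_le_dist) (U_E _ appear_le_mdsp) /step_fun -!big_split /=.
by apply: eq_bigr => j _; rewrite !split_at ?appear_le_dist ?appear_le_mdsp.
Qed.

Lemma GammaE t : Gamma n lam mu d z orig xi v t =
  served (\sum_(k < s) mu k) A_mdsp t - \sum_(k < s) served (mu k) (A_k k) t.
Proof.
rewrite /Gamma /W_dist /W_mdsp workloadE; under eq_bigr do rewrite workloadE.
by rewrite sumrB; have := work_conservation t; lra.
Qed.

Lemma arrived_work_step k T : exists J, forall u, u <= T ->
  A_k k u = step_fun ad (fun j => if xi j == k then v j else 0) J u.
Proof.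
have [J TJ] := horizon T; exists J => u uT; apply: arrived_workE => j /TJ.
exact: le_lt_trans uT.
Qed.

Lemma arrived_work_mdsp_step T : exists J, forall u, u <= T ->
  A_mdsp u = step_fun am v J u.
Proof.
have [J TJ] := horizon T; exists J => u uT; apply: arrived_work_mdspE => j /TJ.
exact: le_lt_trans uT.
Qed.

Lemma pooled_rate_gt0 : 0 < \sum_(k < s) mu k.
Proof.
rewrite (bigD1 (Ordinal s_gt0)) //= ltr_wpDr ?mu_gt0 //.
by apply: sumr_ge0 => k _; exact: ltW.
Qed.

Lemma Gamma_locally_affine : locally_affine (Gamma n lam mu d z orig xi v).
Proof.
have station_work_ge0 k j : 0 <= (if xi j == k then v j else 0) by case: ifP.
rewrite (funext GammaE); apply: locally_affineB.
  exact: served_locally_affine pooled_rate_gt0 v_ge0 arrived_work_mdsp_step.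
apply: locally_affine_sum => k.
exact: served_locally_affine (mu_gt0 k) (station_work_ge0 k) (arrived_work_step k).
Qed.

Lemma Gamma_ge0 t : 0 <= t -> 0 <= Gamma n lam mu d z orig xi v t.
Proof.
move=> t0; rewrite GammaE subr_ge0; apply: sum_served_le_pooled => // [k u|].
  have [J uJ] := horizon u; rewrite (arrived_workE k uJ).
  by apply: step_fun_ge0 => j; case: ifP.
exact: sum_arrived_work_le_mdsp.
Qed.

End Systems.

Theorem proposition4 (R : realType) (s b n : nat) (lam : R) (mu : 'I_s -> R)
    (d : 'I_b -> 'I_s -> R) (z : nat -> R) (orig : nat -> 'I_b)
    (xi : nat -> 'I_s) (v : nat -> R)
    (hs : (2 <= s)%N)
    (hlam : 0 < lam)
    (hmu_pos : forall k, 0 < mu k)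
    (hmu_sorted : forall k l : 'I_s, (k <= l)%N -> mu k <= mu l)
    (hd : forall m k, 0 <= d m k)
    (hz : forall i, 0 <= z i)
    (hz_div : forall M : R, exists j, M < appear lam z j)
    (hv : forall j, 0 <= v j) :
  let G := Gamma n lam mu d z orig xi v in
  [/\ {within `[0, +oo[, continuous G},
      piecewise_linear G &
      forall t : R, 0 <= t -> 0 <= G t].
Proof.
move=> G; have G_affine : locally_affine G :=
  Gamma_locally_affine n orig xi hlam hd hz hz_div hv hmu_pos (ltnW hs).
split; [exact: locally_affine_continuous | exact: locally_affine_piecewise_linear |].
exact: (Gamma_ge0 n orig xi hlam hd hz hz_div hv hmu_pos).
Qed.
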